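(* Let $(R,B)$ be an EIC problem with problem graph $G=(V,E)$ and sender neighborhoods $N_1,\dots,N_n$, and let $\mathscr C=\{V(C): C \text{ is a maximal clique in } G|_{N_i}\text{ for some } i\}$. For every cover $\mathcal C=\{C_j\}\subseteq\mathscr C$ of $V$, there is a neighborhood partition $(\tilde N_1,\dots,\tilde N_n)$ such that $$\sum_{C_j\in\mathcal C}\chi\big(\overline{G|_{C_j}}\big)\ge\sum_{i=1}^n\chi\big(\overline{G|_{\tilde N_i}}\big).$$
   Context: An EIC problem is a pair $(R,B)$ of matrices in $\mathbb{F}_2^{n\times m}$ with disjoint supports (node $u$ needs block $a$ iff $R_{ua}=1$, has it iff $B_{ua}=1$). $P=\{(u,a):R_{ua}=1\}$. The problem graph $G=(V,E)$ has vertices $V=\{v_{(u,a)}:(u,a)\in P\}$ and a directed edge from $v_{(u,a)}$ to $v_{(w,b)}$ iff $B_{ub}=1$ or $a=b$; $G|_S$ is the subgraph induced on $S$. Sender neighborhood of node $k$: $N_k=\{v_{(w,b)}\in V:B_{kb}=1\}$. A neighborhood partition is a tuple $(\tilde N_1,\dots,\tilde N_n)$ with $\tilde N_i\subseteq N_i$, pairwise disjoint, union $V$. For a directed graph $H$ (loops disregarded): $\overline H$ has edge $(x,y)$, $x\ne y$, iff $(x,y)\notin E(H)$; a clique is a vertex set in which every ordered pair of distinct vertices is an edge (maximal if not properly contained in another clique); an independent set contains no edge in either direction; $\chi(H)$ is the minimum number of independent sets partitioning the vertex set ($0$ if empty). A cover of $V$ by elements of $\mathscr C$ is a collection of members of $\mathscr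 C$ whose union is $V$. *)

From HB Require Import structures.
From mathcomp Require Import all_boot all_order all_algebra.
Set Implicit Arguments. Unset Strict Implicit. Unset Printing Implicit Defensive.

(* A directed graph on a finite carrier T: a vertex set and an adjacency
   relation (only pairs of distinct vertices of the vertex set matter). *)
Record digraph (T : finType) := Digraph { dverts : {set T}; dadj : rel T }.

Section Graphs.
Variable T : finType.
Implicit Types (H : digraph T) (A S : {set T}).

Definition induced H S : digraph T := Digraph (S :&: dverts H) (dadj H).

Definition complement H : digraph T :=
  Digraph (dverts H) (fun x y => (x != y) && ~~ dadj H x y).

Definition clique H A : bool :=
  (A \subset dverts H) &&
  [forall x in A, forall y in A, (x != y) ==> dadj H x y].

Definition maximal_clique H A : bool := maxset (clique H) A.

Definition independent H A : bool :=
  (A \subset dverts H) &&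
  [forall x in A, forall y in A, (x != y) ==> ~~ dadj H x y].

Definition indep_partition_of H (k : nat) : bool :=
  [exists P : {set {set T}},
    [&& partition P (dverts H), [forall A in P, independent H A] & #|P| == k]].

Lemma indep_partition_exists H : exists k, indep_partition_of H k.
Proof.
exists #|preim_partition id (dverts H)|.
apply/existsP; exists (preim_partition id (dverts H)).
rewrite preim_partitionP eqxx andbT /=.
apply/forallP => A; apply/implyP => /imsetP [x Dx ->].
rewrite /independent; apply/andP; split.
  by apply/subsetP => y; rewrite inE => /andP [].
apply/forallP => y; apply/implyP; rewrite inE => /andP [_ /eqP <-].
apply/forallP => z; apply/implyP; rewrite inE => /andP [_ /eqP <-].
by rewrite eqxx.
Qed.

(* chromatic number: minimum number of independent sets partitioning the
   vertex set (0 if empty, since the empty partition is then allowed) *)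
Definition chi H : nat := ex_minn (indep_partition_exists H).

End Graphs.

Section EIC.
Variables (n m : nat) (R B : 'M['F_2]_(n, m)).

Definition vtx := ('I_n * 'I_m)%type.

Definition EIC_problem : Prop :=
  forall (u : 'I_n) (a : 'I_m), ~ (R u a = 1 /\ B u a = 1)%R.

Definition problem_verts : {set vtx} := [set p : vtx | R p.1 p.2 == 1%R].

Definition problem_adj : rel vtx :=
  fun x y => (B x.1 y.2 == 1%R) || (x.2 == y.2).

Definition problem_graph : digraph vtx :=
  Digraph problem_verts problem_adj.

Definition sender_nbhd (k : 'I_n) : {set vtx} :=
  [set p in problem_verts | B k p.2 == 1%R].

Definition nbhd_partition (Nt : 'I_n -> {set vtx}) : Prop :=
  [/\ forall i, Nt i \subset sender_nbhd i,
      forall i j, i != j -> [disjoint Nt i & Nt j]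
    & \bigcup_(i < n) Nt i = problem_verts].

Definition max_clique_family : {set {set vtx}} :=
  [set C : {set vtx} | [exists i : 'I_n,
     maximal_clique (induced problem_graph (sender_nbhd i)) C]].

Definition clique_cover (Cs : {set {set vtx}}) : Prop :=
  Cs \subset max_clique_family /\ \bigcup_(C in Cs) C = problem_verts.

End EIC.

From mathcomp Require Import all_boot all_order all_algebra.
Set Implicit Arguments. Unset Strict Implicit. Unset Printing Implicit Defensive.

(* Choose for every vertex v a clique C(v) of the cover containing it, and for
   every clique C of the cover a sender i(C) such that C is a maximal clique of
   G|_{N_i(C)}; give v to the sender i(C(v)).  Within the vertices given to
   sender i, the vertices sharing the same C(v) form a clique of G, i.e. an
   independent set of the complement, so the chromatic number of the
   complement is at most the number of cliques of the cover with sender i.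
   Each clique that is used is nonempty and so contributes at least 1 to the
   left-hand side, and every clique has only one sender. *)

Section DigraphFacts.
Variable T : finType.
Implicit Types (H : digraph T) (A S : {set T}).

Lemma independent_complement H A : independent (complement H) A = clique H A.
Proof.
rewrite /independent /clique /=; congr (_ && _).
apply/eq_forallb_in => x _; apply/eq_forallb_in => y _.
by case: (x != y); rewrite //= negbK.
Qed.

Lemma clique_induced H S A : clique (induced H S) A = (A \subset S) && clique H A.
Proof. by rewrite /clique /= subsetI andbA. Qed.

Lemma cliqueS H A S : S \subset A -> clique H A -> clique H S.
Proof.
move=> /subsetP SA /andP [AV /forall_inP cl].
rewrite /clique (subset_trans (introT subsetP SA) AV).
apply/forall_inP => x /SA /cl /forall_inP clx.
by apply/forall_inP => y /SA; apply: clx.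
Qed.

Lemma chi_gt0 H : dverts H != set0 -> 0 < chi H.
Proof.
rewrite /chi; case: ex_minnP => k /existsP [P /and3P [/and3P [/eqP cov _ _] _]].
move=> /eqP <- _.
by apply: contraNT; rewrite card_gt0 negbK -cov => /eqP ->; rewrite /cover big_set0.
Qed.

Lemma chi_le_indep_partition H k : indep_partition_of H k -> chi H <= k.
Proof. by rewrite /chi; case: ex_minnP => k' _; apply. Qed.

Lemma chi_le_card_imset (U : finType) H (f : T -> U) :
  {in dverts H, forall x, independent H [set y in dverts H | f x == f y]} ->
  chi H <= #|f @: dverts H|.
Proof.
move=> indep_fibres.
apply: (leq_trans (chi_le_indep_partition (k := #|preim_partition f (dverts H)|) _)).
  apply/existsP; exists (preim_partition f (dverts H)).
  rewrite preim_partitionP eqxx andbT /=.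
  by apply/forall_inP => A /imsetP [x Dx ->]; apply: indep_fibres.
rewrite /preim_partition /equivalence_partition.
rewrite (_ : [set _ | x in dverts H] =
   [set (fun u => [set y in dverts H | u == f y]) u | u in f @: dverts H]).
  exact: leq_imset_card.
by rewrite -imset_comp.
Qed.

End DigraphFacts.

Lemma leq_sum_sub (I : finType) (P Q : pred I) (F : I -> nat) :
  (forall i, P i -> Q i) -> \sum_(i | P i) F i <= \sum_(i | Q i) F i.
Proof. exact: (sub_le_big leqnn (fun x y => leq_addr y x)). Qed.

Lemma card_le_sum_gt0 (I : finType) (A : {pred I}) (P : pred I) (F : I -> nat) :
  {in A, forall i, P i} -> {in A, forall i, 0 < F i} -> #|A| <= \sum_(i | P i) F i.
Proof.
move=> AP F_gt0; rewrite -sum1_card.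
apply: (@leq_trans (\sum_(i in A) F i)); first exact: leq_sum.
exact: leq_sum_sub.
Qed.

Lemma sum_fibres_Some_le (I J : finType) (p : I -> option J) (A : {pred I})
    (F : I -> nat) :
  \sum_(j : J) \sum_(i in A | p i == Some j) F i <= \sum_(i in A) F i.
Proof.
rewrite (partition_big p xpredT) //=.
rewrite -(big_imset (fun o => \sum_(i in A | p i == o) F i)) /=.
  exact: leq_sum_sub.
by move=> ? ? _ _ [].
Qed.

Section NeighborhoodPartitionFromCover.
Variables (n m : nat) (R B : 'M['F_2]_(n, m)) (Cs : {set {set vtx n m}}).
Hypothesis Cs_cover : clique_cover R B Cs.

Local Notation V := (problem_verts R).
Local Notation G := (problem_graph R B).

Definition covering_clique (v : vtx n m) : {set vtx n m} :=
  odflt set0 [pick C in Cs | v \in C].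

Definition clique_sender (C : {set vtx n m}) : option 'I_n :=
  [pick i | maximal_clique (induced G (sender_nbhd R B i)) C].

Definition assigned_nbhd (i : 'I_n) : {set vtx n m} :=
  [set v in V | clique_sender (covering_clique v) == Some i].

Lemma covering_cliqueP v :
  v \in V -> covering_clique v \in Cs /\ v \in covering_clique v.
Proof.
case: Cs_cover => _ <- /bigcupP [C CsC vC].
rewrite /covering_clique; case: pickP => [C' /andP [] | /(_ C)] //.
by rewrite CsC vC.
Qed.

Lemma clique_sender_Some C : C \in Cs -> exists i, clique_sender C = Some i.
Proof.
case: Cs_cover => /subsetP sub_family _ /sub_family; rewrite inE => /existsP [i Ci].
by rewrite /clique_sender; case: pickP => [j _ | /(_ i)]; [exists j | rewrite Ci].
Qed.

Lemma clique_senderP C i : clique_sender C = Some i ->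
  C \subset sender_nbhd R B i /\ clique G C.
Proof.
rewrite /clique_sender; case: pickP => // j /maxsetP [+ _] [<-].
by rewrite clique_induced => /andP [].
Qed.

Lemma mem_assigned_nbhd i v :
  (v \in assigned_nbhd i) =
  (v \in V) && (clique_sender (covering_clique v) == Some i).
Proof. by rewrite inE. Qed.

Lemma assigned_nbhd_partition : nbhd_partition R B assigned_nbhd.
Proof.
split.
- move=> i; apply/subsetP => v /[!mem_assigned_nbhd] /andP [Vv /eqP sender_i].
  have [_ vC] := covering_cliqueP Vv.
  by have [/subsetP + _] := clique_senderP sender_i; apply.
- move=> i j; apply: contraNT => /pred0Pn [v /andP []].
  by rewrite !inE => /andP [_ /eqP ->] /andP [_ /eqP [->]].
- apply/setP => v; apply/bigcupP/idP => [[i _] | Vv].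
    by rewrite mem_assigned_nbhd => /andP [].
  have [CsC _] := covering_cliqueP Vv; have [i sender_i] := clique_sender_Some CsC.
  by exists i => //; rewrite mem_assigned_nbhd Vv sender_i eqxx.
Qed.

Lemma chi_assigned_nbhd_le i :
  chi (complement (induced G (assigned_nbhd i))) <=
  \sum_(C in Cs | clique_sender C == Some i) chi (complement (induced G C)).
Proof.
set Nt := assigned_nbhd i.
have Nt_V : {in Nt, forall v, v \in V} by move=> v /[!mem_assigned_nbhd] /andP [].
have verts_Nt : Nt :&: V = Nt by exact/setIidPl/subsetP.
have used_clique : {in Nt, forall v,
    (covering_clique v \in Cs) && (clique_sender (covering_clique v) == Some i)}.
  move=> v /[!mem_assigned_nbhd] /andP [Vv ->].
  by have [->] := covering_cliqueP Vv.
have := @chi_le_card_imset _ _ (complement (induced G Nt)) covering_clique.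
rewrite /= verts_Nt => chi_le; apply: leq_trans (chi_le _) _.
  move=> x Nx; rewrite independent_complement clique_induced setIdE subsetIl /=.
  have /andP [_ /eqP /clique_senderP [_ clique_x]] := used_clique x Nx.
  apply: cliqueS clique_x; apply/subsetP => y /setIP [Ny /[!inE] /eqP ->].
  by have [] := covering_cliqueP (Nt_V y Ny).
apply: card_le_sum_gt0 => C /imsetP [v Nv ->]; first exact: used_clique.
apply/chi_gt0/set0Pn; exists v; rewrite /= inE Nt_V // andbT.
by have [] := covering_cliqueP (Nt_V v Nv).
Qed.

End NeighborhoodPartitionFromCover.

Unset Implicit Arguments.

Theorem lemma7 (n m : nat) (R B : 'M['F_2]_(n, m)) :
  EIC_problem R B ->
  forall Cs : {set {set vtx n m}}, clique_cover R B Cs ->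
  exists Nt : 'I_n -> {set vtx n m},
    nbhd_partition R B Nt /\
    (\sum_(C in Cs) chi (complement (induced (problem_graph R B) C))
       >= \sum_(i < n) chi (complement (induced (problem_graph R B) (Nt i))))%N.
Proof.
move=> _ Cs Cs_cover.
exists (assigned_nbhd R B Cs); split; first exact: assigned_nbhd_partition.
apply: leq_trans (sum_fibres_Some_le (clique_sender R B) _ _).
by apply: leq_sum => i _; apply: chi_assigned_nbhd_le.
Qed.
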